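(* Let $\mathbf{A}$ be a finite algebra with $|A|>1$. Then the diagonal $\Delta=\{(a,a): a\in A\}$ does not Jónsson absorb $\mathbf{A}^2$.
   Context: Jónsson absorption: a subuniverse $B$ of an algebra $\mathbf{C}$ Jónsson absorbs $\mathbf{C}$ if there are ternary terms $d_0,\dots,d_n$ such that $d_i(b,c,b')\in B$ for all $i$, all $b,b'\in B$, $c\in C$; $d_i(x,y,y)=d_{i+1}(x,x,y)$ for all $i<n$; $d_0(x,y,z)=x$ and $d_n(x,y,z)=z$ (identities holding in $\mathbf{C}$). *)

From mathcomp Require Import all_boot.
Set Implicit Arguments. Unset Strict Implicit. Unset Printing Implicit Defensive.

(* A signature: operation symbols F with arities ar. An algebra of this
   signature on carrier C is given by  opC : forall f, ('I_(ar f) -> C) -> C. *)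
Section UA.
Variables (F : Type) (ar : F -> nat).

Inductive term (V : Type) : Type :=
| Var of V
| App (f : F) of ('I_(ar f) -> term V).

Fixpoint eval_term (V C : Type) (opC : forall f, ('I_(ar f) -> C) -> C)
    (env : V -> C) (t : term V) : C :=
  match t with
  | Var v => env v
  | App f args => opC f (fun i => eval_term opC env (args i))
  end.

Definition env3 (C : Type) (x y z : C) : 'I_3 -> C :=
  fun i => match val i with 0 => x | 1 => y | _ => z end.

Definition eval3 (C : Type) (opC : forall f, ('I_(ar f) -> C) -> C)
    (t : term 'I_3) (x y z : C) : C :=
  eval_term opC (env3 x y z) t.

Definition sq_ops (A : Type) (opA : forall f, ('I_(ar f) -> A) -> A) :
    forall f, ('I_(ar f) -> A * A) -> A * A :=
  fun f args => (opA f (fun i => (args i).1), opA f (fun i => (args i).2)).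

Definition jonsson_absorbs (C : Type) (opC : forall f, ('I_(ar f) -> C) -> C)
    (B : C -> Prop) : Prop :=
  exists (n : nat) (d : nat -> term 'I_3),
    [/\ (forall i, i <= n -> forall b c b', B b -> B b' -> B (eval3 opC (d i) b c b')),
        (forall i, i < n -> forall x y : C,
            eval3 opC (d i) x y y = eval3 opC (d i.+1) x x y),
        (forall x y z : C, eval3 opC (d 0) x y z = x) &
        (forall x y z : C, eval3 opC (d n) x y z = z)].

Definition diagonal (A : Type) : A * A -> Prop := fun p => p.1 = p.2.

End UA.

From mathcomp Require Import all_boot.
From Stdlib Require Import FunctionalExtensionality.

Set Implicit Arguments.
Unset Strict Implicit.
Unset Printing Implicit Defensive.

(* If the diagonal Jonsson absorbs A^2 via d_0, ..., d_n, feed the triple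
   ((a,a), (a,b), (b,b)) to each d_i: absorption gives d_i(a,a,b) = d_i(a,b,b),
   and the chain identities give d_i(a,b,b) = d_(i+1)(a,a,b).  Hence
   a = d_0(a,a,b) = d_1(a,a,b) = ... = d_n(a,a,b) = b, so A is trivial. *)

Section SquareAlgebra.
Variables (F : Type) (ar : F -> nat) (A : Type).
Variable opA : forall f : F, ('I_(ar f) -> A) -> A.

Lemma eval_term_sq (V : Type) (env : V -> A * A) (t : term ar V) :
  eval_term (sq_ops opA) env t =
  (eval_term opA (fun v => (env v).1) t, eval_term opA (fun v => (env v).2) t).
Proof.
elim: t => [v|f args IH] /=; first by case: (env v).
by rewrite /sq_ops; congr (_, _); congr (opA _);
  apply: functional_extensionality => i; rewrite IH.
Qed.

Lemma eval3_sq (t : term ar 'I_3) (x y z : A * A) :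
  eval3 (sq_ops opA) t x y z =
  (eval3 opA t x.1 y.1 z.1, eval3 opA t x.2 y.2 z.2).
Proof.
rewrite /eval3 eval_term_sq; congr (_, _); congr (eval_term _ _ _);
  by apply: functional_extensionality => i; rewrite /env3; case: (val i) => [|[|]].
Qed.

Lemma diagonal_jonsson_absorbs_eq :
  jonsson_absorbs (sq_ops opA) (@diagonal A) -> forall a b : A, a = b.
Proof.
move=> [n [d [absorb chain d0 dn]]] a b.
have d_aab_ab i : i <= n -> eval3 opA (d i) a a b = eval3 opA (d i) a b b.
  move=> le_in; have := absorb i le_in (a, a) (a, b) (b, b) erefl erefl.
  by rewrite /diagonal eval3_sq.
have d_aab_a i : i <= n -> eval3 opA (d i) a a b = a.
  elim: i => [_|i IH lt_in].
    by have := d0 (a, a) (a, a) (b, b); rewrite eval3_sq => -[].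
  have := chain i lt_in (a, a) (b, b); rewrite !eval3_sq => -[_ <-].
  by rewrite -d_aab_ab ?IH // ltnW.
have := dn (a, a) (a, a) (b, b); rewrite eval3_sq => -[d_aab _].
by rewrite -[RHS]d_aab d_aab_a.
Qed.

End SquareAlgebra.

Theorem proposition2p8 (F : Type) (ar : F -> nat) (A : finType)
    (opA : forall f : F, ('I_(ar f) -> A) -> A) :
  1 < #|A| ->
  ~ jonsson_absorbs (sq_ops opA) (@diagonal A).
Proof.
case/card_gt1P=> a [b [_ _ neq_ab]] absorbs.
by rewrite (diagonal_jonsson_absorbs_eq absorbs a b) eqxx in neq_ab.
Qed.
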